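(* Let $W$ be a stopping time in $\mathcal{T}$ and let $0<\rho<1$. Then $Cap_{\mathcal{T}}\widehat{W_{\mathcal{T}}^{\rho}}\le\rho^{-2}Cap_{\mathcal{T}}W$.
   Context: Tree. $\mathcal{T}$ is the rooted dyadic tree whose vertices are the dyadic arcs of the unit circle. The root $o$ is the whole circle. The vertices at level $n\ge0$ are the arcs $\{e^{it}:2\pi j2^{-n}\le t<2\pi(j+1)2^{-n}\}$ for $0\le j<2^n$. The two children $x_+,x_-$ of a vertex $x$ are the two arcs at the next level contained in it, and $x^{-1}$ denotes the parent. Write $y\le x$ if $x$ lies in the subtree rooted at $y$, and $y<x$ if moreover $y\ne x$. $[o,x]=\{y:y\le x\}$ is the geodesic from the root. A stopping time is a set of pairwise incomparable vertices. $\mathcal{G}(\{o\},W)$ is the union of the geodesics $[o,w]$, $w\in W$. Capacity. For $f:\mathcal{T}\to\mathbb{R}$ put $If(x)=\sum_{y\in[o,x]}f(y)$, and define $Cap_{\mathcal{T}}(W)=\inf\{\|f\|_{\ell^2(\mathcal{T})}^2: If\ge1\text{ on }W\}$. For a stopping time $W$ there is a unique minimizer $h$, and $H=Ih$ satisfies $H=1$ on $W$ and $\|h\|_{\ell^2}^2=Cap_{\mathcal{T}}W$. Capacitary blowup. For $0<\rho<1$, the capacitary blowup is $\widehat{W_{\mathcal{T}}^{\rho}}=\{t\in\mathcal{G}(\{o\},W):H(t)\ge\rho\text{ and }H(x)\le\rho\text{ for all }x<t\}$. *)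

From HB Require Import structures.
From mathcomp Require Import all_boot all_order all_algebra.
From mathcomp Require Import all_classical all_reals all_analysis.
From Stdlib Require Import ClassicalEpsilon.
Set Implicit Arguments. Unset Strict Implicit. Unset Printing Implicit Defensive.
Import Order.TTheory GRing.Theory Num.Theory.
Local Open Scope classical_set_scope.
Local Open Scope ring_scope.

(* Vertices of the rooted dyadic tree T: a dyadic arc at level n is coded by
   the sequence of n binary choices (child x_- = false, x_+ = true) leading
   from the root o = [::] (the whole circle) to it.  Level = size. *)
Definition vertex := seq bool.
Definition root : vertex := [::].
Definition children (x : vertex) : vertex * vertex := (rcons x true, rcons x false).
Definition parent (x : vertex) : vertex := take (size x).-1 x.

(* y <= x : x lies in the subtree rooted at y, i.e. y is a prefix of x. *)
Definition tle (y x : vertex) : Prop := prefix y x.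
Definition tlt (y x : vertex) : Prop := prefix y x /\ y <> x.

Definition stopping_time (W : set vertex) : Prop :=
  forall x y, W x -> W y -> tle x y -> x = y.

Definition geodesics_to (W : set vertex) : set vertex :=
  [set t | exists2 w, W w & tle t w].

(* If(x) = sum over y in [o,x] of f(y); the prefixes of x are take i x, i <= size x. *)
Definition Iop {R : realType} (f : vertex -> R) (x : vertex) : R :=
  \sum_(i < (size x).+1) f (take i x).

Definition l2norm2 {R : realType} (f : vertex -> R) : \bar R :=
  \esum_(v in [set: vertex]) ((f v) ^+ 2)%:E.

Definition admissible {R : realType} (W : set vertex) (f : vertex -> R) : Prop :=
  forall w, W w -> 1 <= Iop f w.

Definition Cap {R : realType} (W : set vertex) : \bar R :=
  ereal_inf [set l2norm2 f | f in [set f : vertex -> R | admissible W f]].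

Definition is_cap_minimizer {R : realType} (W : set vertex) (f : vertex -> R) : Prop :=
  admissible W f /\ l2norm2 f = Cap W.

(* the (unique, for a stopping time) minimizer h, chosen by epsilon *)
Definition cap_minimizer {R : realType} (W : set vertex) : vertex -> R :=
  epsilon (inhabits (fun _ => 0)) (is_cap_minimizer W).

Definition cap_potential {R : realType} (W : set vertex) : vertex -> R :=
  Iop (cap_minimizer W).

Definition cap_blowup {R : realType} (W : set vertex) (rho : R) : set vertex :=
  [set t | geodesics_to W t /\ rho <= cap_potential W t /\
           (forall x, tlt x t -> cap_potential W x <= rho)].

From Pilot Require Import Defs.
From HB Require Import structures.
From mathcomp Require Import all_boot all_order all_algebra finmap.
From mathcomp Require Import all_classical all_reals all_analysis.
From Stdlib Require Import ClassicalEpsilon.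
Import Order.TTheory GRing.Theory Num.Theory.
Import numFieldNormedType.Exports ArrowAsProduct.
Local Open Scope classical_set_scope.
Local Open Scope ring_scope.

(* The capacity of W is attained.  Clamping an admissible function to [0, 1]
   keeps it admissible and does not increase its norm, so one may minimize over
   the cube [0, 1]^T, which is compact in the product topology (Tychonoff);
   there admissibility and the sublevel sets of the l^2 norm are closed, being
   defined by conditions on finitely many coordinates at a time.  If h is a
   minimizer, then H = I h >= rho on the capacitary blowup, so h / rho is
   admissible for it and its norm is rho^-2 Cap W. *)

Section L2Norm.
Context {R : realType}.
Implicit Types (f : vertex -> R) (r : R).

Lemma l2norm2_leP f r :
  (l2norm2 f <= r%:E)%E <-> forall s : seq vertex, uniq s -> \sum_(x <- s) f x ^+ 2 <= r.
Proof.
split=> [le_fr s s_uniq | sum_le].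
  rewrite -lee_fin; apply: le_trans le_fr; apply: esum_ge; exists [set` s].
    by split; [exact: finite_seq |].
  by rewrite -fsbig_seq // sumEFin.
apply: ge_ereal_sup => _ [A [finA _] <-].
by rewrite fsbig_finite //= sumEFin lee_fin; apply/sum_le/fset_uniq.
Qed.

Lemma l2norm2_ge0 f : (0 <= l2norm2 f)%E.
Proof. by apply: esum_ge0 => x _; rewrite lee_fin sqr_ge0. Qed.

Lemma l2norm2_scale (a : R) f r :
  (l2norm2 f <= r%:E)%E -> (l2norm2 (fun v => (a * f v)%R) <= (a ^+ 2 * r)%:E)%E.
Proof.
move=> /l2norm2_leP le_fr; apply/l2norm2_leP => s s_uniq.
under eq_bigr do rewrite exprMn.
by rewrite -mulr_sumr ler_wpM2l ?sqr_ge0 ?le_fr.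
Qed.

End L2Norm.

Section CapacityBounds.
Context {R : realType}.
Implicit Types (W : set vertex) (f : vertex -> R).

Definition root_indicator : vertex -> R := fun v => (v == Defs.root)%:R.

Lemma admissible_root_indicator W : admissible W root_indicator.
Proof.
move=> w _; rewrite /Iop big_ord_recl /root_indicator take0 eqxx big1 ?addr0 //.
by case: w => [|b w] [i lt_iw].
Qed.

Lemma l2norm2_root_indicator : (l2norm2 root_indicator <= 1%:E)%E.
Proof.
apply/l2norm2_leP => s s_uniq.
have indicator_sqr v : root_indicator v ^+ 2 = (v == Defs.root : nat)%:R.
  by rewrite /root_indicator; case: (v == Defs.root); rewrite ?expr1n ?expr0n.
under eq_bigr do rewrite indicator_sqr.
rewrite -natr_sum (_ : \sum_(v <- s) (v == Defs.root : nat) = count_mem Defs.root s)%N.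
  by rewrite count_uniq_mem // lern1 leq_b1.
by elim: s {s_uniq} => [|v s IHs]; rewrite ?big_nil ?big_cons ?IHs.
Qed.

Lemma Cap_ge0 W : (0 <= @Cap R W)%E.
Proof. by apply: le_ereal_inf_tmp => _ [f _ <-]; exact: l2norm2_ge0. Qed.

Lemma Cap_le1 W : (@Cap R W <= 1%:E)%E.
Proof.
apply: le_trans l2norm2_root_indicator; apply: ereal_inf_lbound.
by exists root_indicator => //; exact: admissible_root_indicator.
Qed.

Lemma Cap_fin_num W : @Cap R W \is a fin_num.
Proof. by rewrite ge0_fin_numE ?Cap_ge0 // (le_lt_trans (Cap_le1 W)) ?ltey. Qed.

End CapacityBounds.

Section Clamping.
Context {R : realType}.
Implicit Types (W : set vertex) (f : vertex -> R).

Definition clamp01 f : vertex -> R := fun v => Num.min 1 (Num.max 0 (f v)).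

Lemma clamp01_ge0 f v : 0 <= clamp01 f v.
Proof. by rewrite le_min ler01 le_max lexx. Qed.

Lemma clamp01_le1 f v : clamp01 f v <= 1.
Proof. by rewrite ge_min lexx. Qed.

Lemma clamp01_sqr_le f v : clamp01 f v ^+ 2 <= f v ^+ 2.
Proof.
rewrite /clamp01; have [fv_le0 | fv_gt0] := lerP (f v) 0.
  by rewrite (min_idPr ler01) expr0n sqr_ge0.
rewrite !expr2.
have clamp_ge0 : 0 <= Num.min 1 (f v) by rewrite le_min ler01 ltW.
by apply: ler_pM => //; rewrite ge_min lexx orbT.
Qed.

Lemma l2norm2_clamp01 f : (l2norm2 (clamp01 f) <= l2norm2 f)%E.
Proof. by apply: le_esum => v _; rewrite lee_fin clamp01_sqr_le. Qed.

(* Either some term on the geodesic is at least 1, and it clamps to 1 while the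
   others stay nonnegative, or no term is decreased by clamping. *)
Lemma admissible_clamp01 W f : admissible W f -> admissible W (clamp01 f).
Proof.
move=> f_adm w Ww; have := f_adm w Ww; rewrite /Iop.
have [[i _ fi_ge1] _ | all_lt1 If_ge1] :=
  pselect (exists2 i : 'I_(size w).+1, true & 1 <= f (take i w)).
  rewrite (bigD1 i) //= /clamp01 (max_idPr (le_trans ler01 fi_ge1)).
  rewrite (min_idPl fi_ge1) lerDl sumr_ge0 // => j _; exact: clamp01_ge0.
apply: le_trans If_ge1 _; apply: ler_sum => i _; rewrite /clamp01.
have fi_lt1 : f (take i w) < 1 by rewrite ltNge; apply/negP => ?; apply: all_lt1; exists i.
by rewrite le_min (ltW fi_lt1) le_max lexx orbT.
Qed.

End Clamping.

Section Compactness.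
Context {R : realType}.
Implicit Types (W : set vertex) (f : vertex -> R).

Lemma continuous_sum (T : topologicalType) (I : Type) (r : seq I) (F : I -> T -> R) :
  (forall i, continuous (F i)) -> continuous (fun x => \sum_(i <- r) F i x).
Proof.
move=> F_cont; elim: r => [|i r IHr].
  rewrite (_ : (fun x => _) = fun=> (0 : R)); first exact: cst_continuous.
  by apply: funext => x; rewrite big_nil.
rewrite (_ : (fun x => _) = F i \+ fun x => \sum_(j <- r) F j x).
  by move=> x; apply: continuousD; [exact: F_cont | exact: IHr].
by apply: funext => x; rewrite big_cons.
Qed.

Lemma continuous_eval (v : vertex) : continuous (fun f : vertex -> R => f v).
Proof. exact: proj_continuous. Qed.

Lemma closed_admissible W : closed [set f : vertex -> R | admissible W f].
Proof.
apply: (@closed_bigI _ _ W (fun w => [set f | 1 <= Iop f w])) => w _.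
apply: (@preimage_closed _ _ (fun f => Iop f w) [set x | 1 <= x]); last exact: closed_ge.
by move=> f _; apply: continuous_sum => i; exact: continuous_eval.
Qed.

Lemma closed_l2norm2_le r : closed [set f : vertex -> R | (l2norm2 f <= r%:E)%E].
Proof.
rewrite (_ : [set f | _] = \bigcap_(s in [set s | uniq s])
                             [set f | \sum_(x <- s) f x ^+ 2 <= r]).
  apply: closed_bigI => s _.
  apply: (@preimage_closed _ _ (fun f => \sum_(x <- s) f x ^+ 2) [set y | y <= r]).
    move=> f _; apply: continuous_sum => x g.
    apply: (continuous_comp (f := fun h : vertex -> R => h x) (g := fun y => y ^+ 2)).
      exact: continuous_eval.
    exact: exprn_continuous.
  exact: closed_le.
by apply/seteqP; split => f /l2norm2_leP.
Qed.

Definition unit_cube : set (vertex -> R) := [set f | forall v, 0 <= f v <= 1].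

Lemma compact_unit_cube : compact unit_cube.
Proof.
rewrite (_ : unit_cube = [set f | forall v, `[0, 1]%classic (f v)]).
  by apply: (@tychonoff _ (fun=> R) (fun=> `[0, 1]%classic)) => _; exact: segment_compact.
by apply/seteqP; split => f f01 v; have := f01 v; rewrite /= in_itv.
Qed.

Lemma compact_nested_closed {T : topologicalType} {K : set T} {S : R -> set T} :
  compact K -> (forall e, 0 < e -> closed (S e)) ->
  (forall e e', 0 < e <= e' -> S e `<=` S e') ->
  (forall e, 0 < e -> K `&` S e !=set0) ->
  exists2 p, K p & forall e, 0 < e -> S e p.
Proof.
move=> K_compact S_closed S_mono S_meets_K.
pose F := filter_from [set e : R | 0 < e] (fun e => K `&` S e).
have F_proper : ProperFilter F.
  apply: filter_from_proper; last by move=> e /S_meets_K.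
  apply: filter_from_filter; first by exists 1 => /=.
  move=> e e' e_gt0 e'_gt0.
  have min_gt0 : 0 < Num.min e e' by rewrite lt_min e_gt0.
  exists (Num.min e e') => // p [Kp Sp]; split; split => //; apply: (S_mono (Num.min e e')) Sp;
    by rewrite min_gt0 ge_min lexx ?orbT.
have [p [Kp p_cluster]] : exists p, K p /\ cluster F p.
  by apply: K_compact; exists 1 => //= q [].
exists p => // e e_gt0; apply: S_closed => //.
rewrite clusterE in p_cluster; apply: closureS (p_cluster _ _); first exact: subIsetr.
by exists e.
Qed.

End Compactness.

Section Minimizer.
Context {R : realType}.
Implicit Types (W : set vertex) (f : vertex -> R).

Lemma Cap_nearly_attained_in_unit_cube W (e : R) : 0 < e ->
  unit_cube `&` [set f | admissible W f /\ (l2norm2 f <= (fine (Cap W) + e)%:E)%E]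
    !=set0.
Proof.
move=> e_gt0; have [_ [f f_adm <-] f_small] := lb_ereal_inf_adherent e_gt0 (Cap_fin_num W).
exists (clamp01 f); split; first by move=> v; rewrite clamp01_ge0 clamp01_le1.
split; first exact: admissible_clamp01.
rewrite EFinD fineK ?Cap_fin_num //; apply: le_trans (l2norm2_clamp01 f) _.
exact: ltW.
Qed.

Lemma cap_minimizer_exists W : exists f : vertex -> R, is_cap_minimizer W f.
Proof.
pose c := fine (@Cap R W).
pose S e := [set f : vertex -> R | admissible W f /\ (l2norm2 f <= (c + e)%:E)%E].
have S_closed e : 0 < e -> closed (S e).
  by move=> _; apply: closedI; [exact: closed_admissible | exact: closed_l2norm2_le].
have S_mono e e' : 0 < e <= e' -> S e `<=` S e'.
  move=> /andP[_ le_ee'] f [f_adm f_small]; split => //.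
  by apply: le_trans f_small _; rewrite lee_fin lerD2l.
have [p _ p_small] := compact_nested_closed compact_unit_cube S_closed S_mono
  (@Cap_nearly_attained_in_unit_cube W).
have p_adm : admissible W p by case: (p_small 1 ltr01).
exists p; split => //; apply/eqP; rewrite eq_le; apply/andP; split; last first.
  by apply: ereal_inf_lbound; exists p.
rewrite -(fineK (Cap_fin_num W)); apply/lee_addgt0Pr => e e_gt0.
by rewrite -EFinD; case: (p_small e e_gt0).
Qed.

Lemma cap_minimizerP W : is_cap_minimizer W (@cap_minimizer R W).
Proof.
have [f f_min] := cap_minimizer_exists W.
exact: epsilon_spec (ex_intro _ f f_min).
Qed.

Lemma admissible_cap_blowup W (rho : R) : 0 < rho ->
  admissible (cap_blowup W rho) (fun v => rho^-1 * cap_minimizer W v).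
Proof.
move=> rho_gt0 t [_ [H_ge _]].
by rewrite /Iop -mulr_sumr ler_pdivlMl // mulr1.
Qed.

End Minimizer.

Theorem mainTheorem3 (R : realType) (W : set vertex) (rho : R) :
  stopping_time W -> 0 < rho -> rho < 1 ->
  (Cap (cap_blowup W rho) <= (rho ^- 2)%:E * Cap W)%E.
Proof.
move=> _ rho_gt0 _.
pose g v := rho^-1 * cap_minimizer W v.
have [_ h_norm] := @cap_minimizerP R W.
have Cap_blowup_le : (Cap (cap_blowup W rho) <= l2norm2 g)%E.
  by apply: ereal_inf_lbound; exists g => //; exact: admissible_cap_blowup.
apply: le_trans Cap_blowup_le _.
rewrite -(fineK (Cap_fin_num W)) -EFinM -exprVn; apply: l2norm2_scale.
by rewrite h_norm fineK ?Cap_fin_num.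
Qed.
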